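(* Let $G\subseteq \mathrm{GL}_n(\mathbb{R})$ be a finite group with fundamental invariants $\pi_1,\dots,\pi_m$, so that $\mathbb{R}[X_1,\dots,X_n]^G=\mathbb{R}[\pi_1,\dots,\pi_m]$, and let $\Pi=(\pi_1,\dots,\pi_m):\mathbb{C}^n\to\mathbb{C}^m$ be the Hilbert map. Let $z\in V_{\mathbb{R}}(I_\Pi)$ be a point whose preimage $\Pi^{-1}(z)\subseteq\mathbb{C}^n$ is not contained in $\mathbb{R}^n$. Then there exists $f\in\left(\Sigma\mathbb{R}[\underline{X}]^2\right)^G$ such that $\phi_z(f)<0$.
   Context: $I_\Pi\subseteq\mathbb{R}[z_1,\dots,z_m]$ is the ideal of polynomial relations among $\pi_1,\dots,\pi_m$, and $V_{\mathbb{R}}(I_\Pi)\subseteq\mathbb{R}^m$ its real zero set. For $z\in V_{\mathbb{R}}(I_\Pi)$, $\phi_z:\mathbb{R}[\underline{X}]^G\to\mathbb{R}$ is the ring homomorphism $g(\pi_1,\dots,\pi_m)\mapsto g(z)$ (well defined since $z$ satisfies all relations). $\Sigma\mathbb{R}[\underline{X}]^2$ is the set of finite sums of squares of polynomials in $\mathbb{R}[\underline{X}]=\mathbb{R}[X_1,\dots,X_n]$, and $\left(\Sigma\mathbb{R}[\underline{X}]^2\right)^G=\Sigma\mathbb{R}[\underline{X}]^2\cap\mathbb{R}[\underline{X}]^G$. *)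

From HB Require Import structures.
From mathcomp Require Import all_boot all_order all_algebra.
From mathcomp Require Import Rstruct.
From Stdlib Require Import Rdefinitions.
From mathcomp Require Import mpoly.
From mathcomp.real_closed Require Import complex.

Set Implicit Arguments.
Unset Strict Implicit.
Unset Printing Implicit Defensive.

Import GRing.Theory Num.Theory.
Local Open Scope ring_scope.
Local Open Scope complex_scope.

Definition finite_matrix_group (n : nat) (G : seq 'M[R]_n) : Prop :=
  [/\ forall g, g \in G -> g \in unitmx,
      1%:M \in G,
      forall g h, g \in G -> h \in G -> g *m h \in G
    & forall g, g \in G -> invmx g \in G].

Definition mat_act (n : nat) (g : 'M[R]_n) (f : {mpoly R[n]}) : {mpoly R[n]} :=
  f \mPo [tuple \sum_(j < n) g i j *: 'X_j | i < n].

Definition G_invariant (n : nat) (G : seq 'M[R]_n) (f : {mpoly R[n]}) : Prop :=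
  forall g, g \in G -> mat_act g f = f.

Definition fundamental_invariants (n m : nat) (G : seq 'M[R]_n)
    (pi : m.-tuple {mpoly R[n]}) : Prop :=
  (forall i : 'I_m, G_invariant G (tnth pi i)) /\
  (forall f, G_invariant G f -> exists g : {mpoly R[m]}, f = g \mPo pi).

Definition relation_ideal (n m : nat) (pi : m.-tuple {mpoly R[n]})
    (g : {mpoly R[m]}) : Prop :=
  g \mPo pi = 0.

Definition in_real_variety (n m : nat) (pi : m.-tuple {mpoly R[n]})
    (z : 'I_m -> R) : Prop :=
  forall g : {mpoly R[m]}, relation_ideal pi g -> g.@[z] = 0.

Definition hilbert_map (n m : nat) (pi : m.-tuple {mpoly R[n]})
    (w : 'I_n -> R[i]) : 'I_m -> R[i] :=
  fun i => (map_mpoly (real_complex R) (tnth pi i)).@[w].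

Definition preimage_real (n m : nat) (pi : m.-tuple {mpoly R[n]})
    (z : 'I_m -> R) : Prop :=
  forall w : 'I_n -> R[i],
    (forall i, hilbert_map pi w i = ((z i)%:C)%C) ->
    exists x : 'I_n -> R, forall j, w j = (x j)%:C.

Definition sos (n : nat) (f : {mpoly R[n]}) : Prop :=
  exists s : seq {mpoly R[n]}, f = \sum_(q <- s) q ^+ 2.

(* phi_z(f) = v : for f = g(pi_1, ..., pi_m), phi_z(f) = g(z).
   (Well defined for z in V_R(I_Pi); stated relationally.) *)
Definition phi_value (n m : nat) (pi : m.-tuple {mpoly R[n]})
    (z : 'I_m -> R) (f : {mpoly R[n]}) (v : R) : Prop :=
  exists g : {mpoly R[m]}, f = g \mPo pi /\ g.@[z] = v.

(* Pick a point w of the fiber over z with a non-real coordinate w_j.  The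
   function isgn t = i sgn(Im t) commutes with complex conjugation, so on the
   finite set of j-th coordinates of the points g w (g in G) it is interpolated
   by a real polynomial p.  Then f = sum_(g in G) (p(X_j) o g)^2 is a G-invariant
   sum of squares with f(w) = sum_g isgn((g w)_j)^2 = - #{g | (g w)_j not real},
   which is negative because g = 1 counts.  Writing f = q(pi_1, ..., pi_m) gives
   phi_z(f) = q(z) = q(Pi(w)) = f(w). *)

From HB Require Import structures.
From mathcomp Require Import all_boot all_order all_algebra.
From mathcomp Require Import Rstruct.
From Stdlib Require Import Rdefinitions Classical.
From mathcomp Require Import mpoly.
From mathcomp.real_closed Require Import complex.
Import GRing.Theory Num.Theory.
Local Open Scope ring_scope.

Set Implicit Arguments.
Unset Strict Implicit.
Unset Printing Implicit Defensive.

Lemma comp_mpolyA (S : comRingType) (n k l : nat) (p : {mpoly S[n]})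
    (lq : n.-tuple {mpoly S[k]}) (lr : k.-tuple {mpoly S[l]}) :
  (p \mPo lq) \mPo lr = p \mPo [tuple tnth lq i \mPo lr | i < n].
Proof.
rewrite [p \mPo lq]comp_mpolyEX [RHS]comp_mpolyEX raddf_sum /=.
apply: eq_bigr => m _; rewrite comp_mpolyZ !comp_mpolyX rmorph_prod /=.
by congr (_ *: _); apply: eq_bigr => i _; rewrite rmorphXn tnth_mktuple.
Qed.

Lemma poly_interpolation (F : fieldType) (S : seq F) (v : F -> F) :
  exists p : {poly F}, {in S, forall t, p.[t] = v t}.
Proof.
elim: S => [|s S [p interp_p]]; first by exists 0.
have [sS | sNS] := boolP (s \in S).
  by exists p => t; rewrite inE => /predU1P [-> |]; apply: interp_p.
pose q := \prod_(u <- S) ('X - u%:P).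
have q_s : q.[s] != 0.
  rewrite horner_prod prodf_seq_neq0; apply/allP => u uS /=.
  by rewrite hornerXsubC subr_eq0; apply: contraNneq sNS => ->.
have q_S t : t \in S -> q.[t] = 0.
  by move=> tS; apply/rootP; rewrite root_prod_XsubC.
exists (p + ((v s - p.[s]) / q.[s]) *: q) => t.
rewrite inE hornerD hornerZ => /predU1P [-> | tS].
  by rewrite divfK // addrC subrK.
by rewrite (q_S t tS) mulr0 addr0 interp_p.
Qed.

Section ComplexPolynomials.
Variable K : rcfType.
Local Open Scope complex_scope.

Lemma real_poly_interpolation (S : seq K[i]) (v : K[i] -> K[i]) :
  (forall t, v t^* = (v t)^*) ->
  exists p : {poly K}, {in S, forall t, (map_poly (real_complex K) p).[t] = v t}.
Proof.
move=> v_conj; have [u interp_u] := poly_interpolation (S ++ map conjc S) v.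
exists (map_poly (@complex.Re K) u) => t tS.
have re_u : map_poly (real_complex K) (map_poly (@complex.Re K) u) =
    (u + map_poly conjc u) * 2%:R^-1%:P.
  apply/polyP => k; rewrite coefMC coefD !coef_map_id0 //=; last by rewrite oppr0.
  exact: ReJ_add.
rewrite re_u hornerM hornerC hornerD -{2}[t]conjcK horner_map /=.
rewrite interp_u ?mem_cat ?tS // interp_u ?mem_cat ?map_f ?orbT //.
by rewrite v_conj conjcK -mulr2n -[v t *+ 2]mulr_natr mulfK // pnatr_eq0.
Qed.

Definition isgn (t : K[i]) : K[i] := (Num.sg (complex.Im t))%:C * 'i.

Lemma isgn_conj t : isgn t^* = (isgn t)^*.
Proof. by case: t => a b; rewrite /isgn /= sgrN; simpc. Qed.

Lemma isgn_sqr t : isgn t ^+ 2 = - ((complex.Im t != 0)%:R)%:C.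
Proof. by rewrite exprMn sqr_i -rmorphXn sqr_sg mulrN1. Qed.

End ComplexPolynomials.

Local Open Scope complex_scope.
Local Notation RC := (real_complex R).

HB.instance Definition _ (n : nat) (g : 'M[R]_n) :=
  GRing.RMorphism.copy (mat_act g)
    (comp_mpoly [tuple \sum_(j < n) g i j *: 'X_j | i < n]).

Lemma mat_act_mul (n : nat) (g h : 'M[R]_n) (p : {mpoly R[n]}) :
  mat_act h (mat_act g p) = mat_act (g *m h) p.
Proof.
rewrite /mat_act comp_mpolyA; congr (_ \mPo _); apply: eq_from_tnth => i.
rewrite !tnth_mktuple raddf_sum /=.
under eq_bigr do
  rewrite comp_mpolyZ comp_mpolyXU -tnth_nth tnth_mktuple scaler_sumr.
rewrite exchange_big /=; apply: eq_bigr => k _.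
by rewrite mxE scaler_suml; apply: eq_bigr => j _; rewrite scalerA.
Qed.

Definition ceval (n : nat) (w : 'I_n -> R[i]) : {mpoly R[n]} -> R[i] :=
  meval w \o map_mpoly RC.
HB.instance Definition _ n (w : 'I_n -> R[i]) := GRing.RMorphism.on (ceval w).

Definition cmx_apply (n : nat) (g : 'M[R]_n) (w : 'I_n -> R[i]) : 'I_n -> R[i] :=
  fun i => \sum_(j < n) RC (g i j) * w j.

Lemma eq_ceval n (w1 w2 : 'I_n -> R[i]) p : w1 =1 w2 -> ceval w1 p = ceval w2 p.
Proof. exact: meval_eq. Qed.

Lemma cevalC n (w : 'I_n -> R[i]) c : ceval w c%:MP = RC c.
Proof. by rewrite /ceval /= map_mpolyC mevalC. Qed.

Lemma cevalXU n (w : 'I_n -> R[i]) j : ceval w 'X_j = w j.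
Proof. by rewrite /ceval /= map_mpolyX mevalXU. Qed.

Lemma cmx_apply1 n (w : 'I_n -> R[i]) : cmx_apply 1%:M w =1 w.
Proof.
move=> i; rewrite /cmx_apply (bigD1 i) //= mxE eqxx mul1r big1 ?addr0 //.
by move=> j /negbTE; rewrite mxE eq_sym => ->; rewrite mul0r.
Qed.

Lemma ceval_comp n k (p : {mpoly R[k]}) (lq : k.-tuple {mpoly R[n]}) w :
  ceval w (p \mPo lq) = ceval (fun i => ceval w (tnth lq i)) p.
Proof.
rewrite /ceval /= map_mpoly_comp; last exact: complexI.
by rewrite comp_mpoly_meval; apply: meval_eq => i; rewrite tnth_map.
Qed.

Lemma ceval_real n (p : {mpoly R[n]}) (x : 'I_n -> R) :
  ceval (fun i => RC (x i)) p = RC p.@[x].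
Proof.
rewrite /ceval /= !mevalE (perm_big _ (msupp_map_mpoly _ (@complexI _))) rmorph_sum.
apply: eq_bigr => m _; rewrite mcoeff_map_mpoly rmorphM rmorph_prod.
by congr (_ * _); apply: eq_bigr => i _; rewrite rmorphXn.
Qed.

Lemma ceval_mat_act n (g : 'M[R]_n) p w :
  ceval w (mat_act g p) = ceval (cmx_apply g w) p.
Proof.
rewrite /mat_act ceval_comp; apply: eq_ceval => i.
rewrite tnth_mktuple rmorph_sum; apply: eq_bigr => j _.
by rewrite -mul_mpolyC rmorphM /= cevalC cevalXU.
Qed.

Lemma ceval_fiber (n m : nat) (pi : m.-tuple {mpoly R[n]}) (z : 'I_m -> R) w :
  (forall i, hilbert_map pi w i = RC (z i)) ->
  forall q, ceval w (q \mPo pi) = RC q.@[z].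
Proof. by move=> piw q; rewrite ceval_comp -ceval_real; apply: eq_ceval. Qed.

Definition mpoly_of_poly (n : nat) (j : 'I_n) (p : {poly R}) : {mpoly R[n]} :=
  (map_poly (@mpolyC n R) p).['X_j].

Lemma ceval_mpoly_of_poly n (j : 'I_n) p w :
  ceval w (mpoly_of_poly j p) = (map_poly RC p).[w j].
Proof.
rewrite /mpoly_of_poly -horner_map -map_poly_comp /=.
by rewrite cevalXU; congr (_.[_]); apply: eq_map_poly => c /=; rewrite cevalC.
Qed.

Section OrbitSum.
Variables (n : nat) (G : seq 'M[R]_n).

(* [G] may list an element several times; summing over [undup G] makes
   right multiplication by [h \in G] a permutation of the summation range. *)
Definition orbit_sum (p : {mpoly R[n]}) : {mpoly R[n]} :=
  \sum_(g <- undup G) mat_act g p.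

Lemma orbit_sum_invariant p : finite_matrix_group G -> G_invariant G (orbit_sum p).
Proof.
move=> [G_unit _ G_mul G_inv] h hG; rewrite /orbit_sum rmorph_sum /=.
under eq_bigr do rewrite mat_act_mul.
rewrite -(big_map (mulmx^~ h) xpredT (fun g => mat_act g p)); apply: perm_big.
apply: uniq_perm; rewrite ?undup_uniq //.
  by rewrite (map_inj_uniq (can_inj (mulmxK (G_unit h hG)))) undup_uniq.
move=> g; rewrite mem_undup; apply/mapP/idP => [[g' g'G ->] | gG].
  by apply: G_mul; rewrite // -mem_undup.
by exists (g *m invmx h); rewrite ?mulmxKV ?G_unit // mem_undup G_mul ?G_inv.
Qed.

Lemma orbit_sum_sqr_sos q : sos (orbit_sum (q ^+ 2)).
Proof.
exists [seq mat_act g q | g <- undup G]; rewrite big_map.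
by apply: eq_bigr => g _; rewrite rmorphXn.
Qed.

Lemma ceval_orbit_sum p w :
  ceval w (orbit_sum p) = \sum_(g <- undup G) ceval (cmx_apply g w) p.
Proof. by rewrite rmorph_sum; apply: eq_bigr => g _ /=; rewrite ceval_mat_act. Qed.

End OrbitSum.

Lemma nonreal_fiber_point n m (pi : m.-tuple {mpoly R[n]}) (z : 'I_m -> R) :
  ~ preimage_real pi z ->
  exists w j, (forall i, hilbert_map pi w i = RC (z i)) /\ complex.Im (w j) != 0.
Proof.
move=> not_real; apply: NNPP => no_w; apply: not_real => w piw.
exists (fun j => complex.Re (w j)) => j; case E: (w j) => [a b] /=.
have [-> // | b_nz] := eqVneq b 0.
by case: no_w; exists w, j; rewrite E.
Qed.

Section SignInterpolant.
Variables (n : nat) (G : seq 'M[R]_n) (w : 'I_n -> R[i]) (j : 'I_n).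

Let orbit_j := [seq cmx_apply g w j | g <- undup G].
Let nonreal_count :=
  \sum_(g <- undup G) ((complex.Im (cmx_apply g w j) != 0)%:R : R).

Lemma ceval_orbit_sum_isgn_sqr p :
  {in orbit_j, forall t, (map_poly RC p).[t] = isgn t} ->
  ceval w (orbit_sum G (mpoly_of_poly j p ^+ 2)) = RC (- nonreal_count).
Proof.
move=> p_isgn; rewrite ceval_orbit_sum rmorphN rmorph_sum -sumrN.
apply: eq_big_seq => g gG; rewrite rmorphXn /= ceval_mpoly_of_poly p_isgn.
  by rewrite isgn_sqr rmorph_nat.
exact: map_f.
Qed.

Lemma nonreal_count_gt0 :
  1%:M \in G -> complex.Im (w j) != 0 -> 0 < nonreal_count.
Proof.
rewrite -mem_undup => G1 Im_wj.
rewrite /nonreal_count (bigD1_seq _ G1 (undup_uniq G)) /= cmx_apply1 Im_wj.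
by apply: ltr_pwDl; rewrite ?ltr01 // sumr_ge0.
Qed.

End SignInterpolant.

Unset Implicit Arguments.

Theorem proposition2p4 (n m : nat) (G : seq 'M[R]_n)
    (pi : m.-tuple {mpoly R[n]}) (z : 'I_m -> R) :
  finite_matrix_group G ->
  fundamental_invariants G pi ->
  in_real_variety pi z ->
  ~ preimage_real pi z ->
  exists f : {mpoly R[n]},
    sos f /\ G_invariant G f /\ exists v : R, phi_value pi z f v /\ v < 0.
Proof.
move=> groupG [_ fundG] _ /nonreal_fiber_point [w [j [piw Im_wj]]].
have [p p_isgn] :=
  real_poly_interpolation [seq cmx_apply g w j | g <- undup G] (@isgn_conj _).
pose f := orbit_sum G (mpoly_of_poly j p ^+ 2).
have f_inv : G_invariant G f by exact: orbit_sum_invariant.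
have [q fE] := fundG f f_inv.
exists f; split; first exact: orbit_sum_sqr_sos.
split=> //; exists q.@[z]; split; first by exists q.
have := ceval_fiber piw q; rewrite -fE ceval_orbit_sum_isgn_sqr // => /complexI <-.
by rewrite oppr_lt0 nonreal_count_gt0 //; case: groupG.
Qed.
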